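(* Let $\alpha>2$, and for $s_1,s_2>0$ define \[ f(s_1,s_2)=\frac{\int_0^\infty e^{-(s_1+s_2)x^{2/\alpha}}\frac{dx}{1+x}}{s_1\int_0^\infty x^{2/\alpha}e^{-(s_1+s_2)x^{2/\alpha}}\frac{dx}{1+x}}. \] Then for each fixed $s_1>0$, the function $s_2\mapsto f(s_1,s_2)$ is monotonically increasing on $(0,\infty)$. *)

From Stdlib Require Import Reals.
From Coquelicot Require Import Coquelicot.
Open Scope R_scope.

(* x^(2/alpha) for x > 0, via Rpower (only evaluated on (0, oo)). *)
Definition xpow (alpha x : R) : R := Rpower x (2 / alpha).

Definition Iint (g : R -> R) : R :=
  RInt_gen g (at_right 0) (Rbar_locally p_infty).

Definition I0 (alpha s1 s2 : R) : R :=
  Iint (fun x => exp (- (s1 + s2) * xpow alpha x) / (1 + x)).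

Definition I1 (alpha s1 s2 : R) : R :=
  Iint (fun x => xpow alpha x * exp (- (s1 + s2) * xpow alpha x) / (1 + x)).

Definition fratio (alpha s1 s2 : R) : R := I0 alpha s1 s2 / (s1 * I1 alpha s1 s2).

(* With t = s1 + s2 and y = x^(2/alpha), write I0(t), I1(t) for the two
   integrals.  For t < t' put d = t' - t and m = I1(t) / I0(t).  The function
   (y - m) (e^(-d m) - e^(-d y)) is nonnegative, and integrating it against
   e^(-t y) dx / (1 + x) gives  m I0(t') - I1(t') > e^(-d m) (m I0(t) - I1(t)) = 0,
   i.e. I0(t) I1(t') < I0(t') I1(t), which is the monotonicity of the ratio.
   The improper integrals exist because the integrands are nonnegative and
   dominated by K / (1 + x)^2, so their partial integrals are bounded. *)

From Stdlib Require Import Reals Lra Classical.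
From Coquelicot Require Import Coquelicot.
Open Scope R_scope.

Notation at_0_right := (at_right 0).
Notation at_p_infty := (Rbar_locally p_infty).

Lemma exp_le x y : x <= y -> exp x <= exp y.
Proof. intros [h | ->]; [left; apply exp_increasing |]; lra. Qed.

Lemma Rpower_pos x p : 0 < Rpower x p.
Proof. apply exp_pos. Qed.

Section Nonnegative.

Variable f : R -> R.
Hypothesis f_cont : forall x, 0 < x -> continuous f x.
Hypothesis f_ge0 : forall x, 0 < x -> 0 <= f x.

Lemma ex_RInt_pos a b : 0 < a -> a <= b -> ex_RInt f a b.
Proof.
  intros ha hab. apply (ex_RInt_continuous (V := R_CompleteNormedModule)).
  intros z hz. rewrite Rmin_left in hz by lra. apply f_cont; lra.
Qed.

Lemma RInt_le_enlarge a' a b b' : 0 < a' -> a' <= a -> a <= b -> b <= b' ->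
  RInt f a b <= RInt f a' b'.
Proof.
  intros h1 h2 h3 h4.
  rewrite <- (RInt_Chasles f a' a b') by (apply ex_RInt_pos; lra).
  rewrite <- (RInt_Chasles f a b b') by (apply ex_RInt_pos; lra).
  assert (0 <= RInt f a' a)
    by (apply RInt_ge_0; [lra | apply ex_RInt_pos; lra | intros; apply f_ge0; lra]).
  assert (0 <= RInt f b b')
    by (apply RInt_ge_0; [lra | apply ex_RInt_pos; lra | intros; apply f_ge0; lra]).
  repeat change (plus ?x ?y) with (x + y). lra.
Qed.

Lemma RInt_le_is_RInt_gen l : is_RInt_gen f at_0_right at_p_infty l ->
  forall a b, 0 < a -> a <= b -> RInt f a b <= l.
Proof.
  intros H a b ha hab. apply Rnot_lt_le. intros hlt.
  assert (he : 0 < RInt f a b - l) by lra.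
  destruct (H _ (locally_ball l (mkposreal _ he))) as [Q P [d Hd] [M HM] HP].
  pose proof (cond_pos d).
  pose proof (Rmin_l (d / 2) a). pose proof (Rmin_r (d / 2) a).
  pose proof (Rmax_l (M + 1) b). pose proof (Rmax_r (M + 1) b).
  set (a' := Rmin (d / 2) a) in *. set (b' := Rmax (M + 1) b) in *.
  assert (0 < a') by (apply Rmin_glb_lt; lra).
  assert (hQ : Q a').
  { apply Hd; [| lra]. change (Rabs (a' - 0) < d). rewrite Rminus_0_r, Rabs_right; lra. }
  destruct (HP a' b' hQ (HM b' ltac:(lra))) as [y [hy hyl]].
  apply (is_RInt_unique (V := R_CompleteNormedModule)) in hy. simpl in hy.
  assert (RInt f a b <= RInt f a' b') by (apply RInt_le_enlarge; lra).
  change (Rabs (y - l) < RInt f a b - l) in hyl.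
  pose proof (Rle_abs (y - l)). lra.
Qed.

Lemma is_RInt_gen_gt_0 l : is_RInt_gen f at_0_right at_p_infty l ->
  (exists x0, 0 < x0 /\ 0 < f x0) -> 0 < l.
Proof.
  intros H [x0 [hx0 hf0]].
  assert (he : 0 < f x0 / 2) by lra.
  destruct (f_cont x0 hx0 _ (locally_ball _ (mkposreal _ he))) as [d Hd].
  pose proof (cond_pos d).
  pose proof (Rmin_l (d / 2) (x0 / 2)). pose proof (Rmin_r (d / 2) (x0 / 2)).
  set (r := Rmin (d / 2) (x0 / 2)) in *.
  assert (hr : 0 < r) by (apply Rmin_glb_lt; lra).
  assert (0 < RInt f (x0 - r) (x0 + r)).
  { apply RInt_gt_0; [lra | | intros; apply f_cont; lra].
    intros x hx. assert (hb : Rabs (x - x0) < d) by (apply Rabs_def1; lra).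
    specialize (Hd x hb). change (Rabs (f x - f x0) < f x0 / 2) in Hd.
    apply Rabs_def2 in Hd. lra. }
  assert (RInt f (x0 - r) (x0 + r) <= l) by (apply RInt_le_is_RInt_gen; auto; lra).
  lra.
Qed.

(* The limit is the supremum of the partial integrals over [a, b] with 0 < a <= b. *)
Lemma ex_RInt_gen_of_bounded C : (forall a b, 0 < a -> a <= b -> RInt f a b <= C) ->
  exists S, is_RInt_gen f at_0_right at_p_infty S.
Proof.
  intros hC.
  set (E := fun v => exists a b, 0 < a /\ a <= b /\ v = RInt f a b).
  assert (hE : bound E) by (exists C; intros v [a [b [h1 [h2 ->]]]]; auto).
  assert (hne : exists v, E v) by (exists (RInt f 1 1), 1, 1; repeat split; lra).
  destruct (completeness E hE hne) as [S [S_ub S_lub]].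
  exists S. intros P [eps HP].
  destruct (classic (exists v, E v /\ S - eps < v))
    as [[v [[a0 [b0 [ha0 [hab0 ->]]]] hv]] | hno].
  - apply Filter_prod with (fun a => 0 < a <= a0) (fun b => b0 <= b).
    + exists (mkposreal a0 ha0). intros y hy hy0.
      change (Rabs (y - 0) < a0) in hy. rewrite Rminus_0_r, Rabs_right in hy; lra.
    + exists b0. intros; lra.
    + intros a b [ha1 ha2] hb. exists (RInt f a b). split.
      * apply (RInt_correct (V := R_CompleteNormedModule)), ex_RInt_pos; lra.
      * apply HP. change (Rabs (RInt f a b - S) < eps).
        assert (RInt f a b <= S) by (apply S_ub; exists a, b; repeat split; lra).
        assert (RInt f a0 b0 <= RInt f a b) by (apply RInt_le_enlarge; lra).
        apply Rabs_def1; destruct eps; simpl in *; lra.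
  - assert (S <= S - eps); [| destruct eps; simpl in *; lra].
    apply S_lub. intros v hv. apply Rnot_lt_le. intros hlt. apply hno. eauto.
Qed.

Lemma RInt_le_of_le_inv_sq K : 0 <= K ->
  (forall x, 0 < x -> f x <= K / (1 + x) ^ 2) ->
  forall a b, 0 < a -> a <= b -> RInt f a b <= K.
Proof.
  intros hK hf a b ha hab.
  assert (hg : is_RInt (fun x => K / (1 + x) ^ 2) a b (- K / (1 + b) - - K / (1 + a))).
  { apply (is_RInt_derive (V := R_CompleteNormedModule) (fun x => - K / (1 + x)));
      intros x hx; rewrite Rmin_left, Rmax_right in hx by lra.
    - auto_derive; [lra | field; lra].
    - apply (ex_derive_continuous (K := R_AbsRing) (V := R_NormedModule)).
      auto_derive. apply Rgt_not_eq. nra. }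
  assert (hle : RInt f a b <= RInt (fun x => K / (1 + x) ^ 2) a b).
  { apply RInt_le; [lra | apply ex_RInt_pos; lra | eexists; exact hg |].
    intros x hx. apply hf. lra. }
  rewrite (is_RInt_unique (V := R_CompleteNormedModule) _ _ _ _ hg) in hle.
  assert (0 <= K / (1 + b)) by (apply Rdiv_le_0_compat; lra).
  assert (K / (1 + a) <= K / 1) by (apply Rmult_le_compat_l; [lra | apply Rinv_le_contravar; lra]).
  unfold Rdiv in *. lra.
Qed.

End Nonnegative.

Lemma sq_div4_le_exp u : 0 <= u -> u ^ 2 / 4 <= exp u.
Proof.
  intros hu. replace u with (u / 2 + u / 2) at 2 by field. rewrite exp_plus.
  pose proof (exp_ineq1_le (u / 2)). nra.
Qed.

Lemma linear_sub_quad_le k u : 0 < k -> 2 * u - k * u ^ 2 / 4 <= 4 / k.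
Proof.
  intros hk.
  assert (0 <= k * (u - 4 / k) ^ 2 / 4) by (pose proof (pow2_ge_0 (u - 4 / k)); nra).
  assert (4 / k = 2 * u - k * u ^ 2 / 4 + k * (u - 4 / k) ^ 2 / 4) by (field; lra).
  lra.
Qed.

(* For x > 1, with u = ln x: x^2 e^(-t x^p) <= exp (2u - t (p u)^2 / 4). *)
Lemma decay_bound p t x : 0 < p < 1 -> 0 < t -> 0 < x ->
  (1 + x) * (1 + Rpower x p) * exp (- t * Rpower x p) <= 4 * exp (4 / (t * p ^ 2)).
Proof.
  intros hp ht hx.
  assert (hk : 0 < t * p ^ 2) by (apply Rmult_lt_0_compat; [| apply pow_lt]; lra).
  assert (hE : 1 <= exp (4 / (t * p ^ 2)))
    by (rewrite <- exp_0; apply exp_le, Rlt_le, Rdiv_lt_0_compat; lra).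
  pose proof (Rpower_pos x p). pose proof (exp_pos (- t * Rpower x p)).
  destruct (Rle_or_lt x 1) as [hx1 | hx1].
  - assert (ln x <= 0) by (rewrite <- ln_1; apply ln_le; lra).
    assert (Rpower x p <= 1) by (rewrite <- exp_0; apply exp_le; nra).
    assert (exp (- t * Rpower x p) <= 1) by (rewrite <- exp_0; apply exp_le; nra).
    assert (0 <= (1 + x) * (1 + Rpower x p) <= 4) by nra.
    nra.
  - set (u := ln x).
    assert (hu : 0 < u) by (unfold u; rewrite <- ln_1; apply ln_increasing; lra).
    assert (hxu : x = exp u) by (unfold u; rewrite exp_ln; lra).
    assert (hy : Rpower x p = exp (p * u)) by reflexivity.
    set (y := Rpower x p) in *.
    assert (y <= x) by (rewrite hy, hxu; apply exp_le; nra).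
    assert (1 <= y) by (rewrite hy; pose proof (exp_ineq1_le (p * u)); nra).
    assert ((p * u) ^ 2 / 4 <= y) by (rewrite hy; apply sq_div4_le_exp; nra).
    assert (hexp : x * x * exp (- t * y) <= exp (4 / (t * p ^ 2))).
    { rewrite hxu, <- !exp_plus. apply exp_le.
      pose proof (linear_sub_quad_le (t * p ^ 2) u hk). nra. }
    assert ((1 + x) * (1 + y) <= 4 * (x * x)) by nra.
    nra.
Qed.

Lemma two_div_bounds a : 2 < a -> 0 < 2 / a < 1.
Proof.
  intros ha. assert (0 < 2 / a) by (apply Rdiv_lt_0_compat; lra).
  assert (2 / a * a = 2) by (field; lra). split; nra.
Qed.

Lemma is_RInt_gen_of_decay a t (f : R -> R) : 2 < a -> 0 < t ->
  (forall x, 0 < x -> continuous f x) -> (forall x, 0 < x -> 0 < f x) ->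
  (forall x, 0 < x -> (1 + x) * f x <= (1 + xpow a x) * exp (- t * xpow a x)) ->
  exists S, is_RInt_gen f at_0_right at_p_infty S /\ 0 < S.
Proof.
  intros ha ht f_cont f_gt0 f_decay.
  set (K := 4 * exp (4 / (t * (2 / a) ^ 2))).
  assert (f_ge0 : forall x, 0 < x -> 0 <= f x) by (intros; apply Rlt_le; auto).
  assert (hK : 0 <= K) by (pose proof (exp_pos (4 / (t * (2 / a) ^ 2))); unfold K; lra).
  assert (f_bound : forall x, 0 < x -> f x <= K / (1 + x) ^ 2).
  { intros x hx. pose proof (decay_bound (2 / a) t x (two_div_bounds a ha) ht hx).
    specialize (f_decay x hx). unfold xpow in f_decay.
    assert (hx2 : 0 < (1 + x) ^ 2) by nra.
    apply (Rmult_le_reg_r ((1 + x) ^ 2)); [exact hx2 |].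
    unfold Rdiv. rewrite Rmult_assoc, Rinv_l, Rmult_1_r by lra.
    assert (f x * (1 + x) ^ 2 = (1 + x) * ((1 + x) * f x)) by ring.
    assert ((1 + x) * ((1 + x) * f x)
            <= (1 + x) * ((1 + Rpower x (2 / a)) * exp (- t * Rpower x (2 / a))))
      by (apply Rmult_le_compat_l; lra).
    unfold K. lra. }
  destruct (ex_RInt_gen_of_bounded f f_cont f_ge0 K
              (RInt_le_of_le_inv_sq f f_cont K hK f_bound)) as [S HS].
  exists S. split; [exact HS |].
  apply (is_RInt_gen_gt_0 f f_cont f_ge0 S HS). exists 1. split; [| apply f_gt0]; lra.
Qed.

Definition integrand0 a t x := exp (- t * xpow a x) / (1 + x).
Definition integrand1 a t x := xpow a x * exp (- t * xpow a x) / (1 + x).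

Lemma is_RInt_gen_integrand0 a t : 2 < a -> 0 < t ->
  exists S, is_RInt_gen (integrand0 a t) at_0_right at_p_infty S /\ 0 < S.
Proof.
  intros ha ht. apply (is_RInt_gen_of_decay a t); auto; intros x hx; unfold integrand0.
  - apply (ex_derive_continuous (K := R_AbsRing) (V := R_NormedModule)).
    unfold xpow, Rpower. auto_derive. lra.
  - apply Rdiv_lt_0_compat; [apply exp_pos | lra].
  - pose proof (Rpower_pos x (2 / a) : 0 < xpow a x). pose proof (exp_pos (- t * xpow a x)).
    replace ((1 + x) * (exp (- t * xpow a x) / (1 + x))) with (exp (- t * xpow a x))
      by (field; lra).
    nra.
Qed.

Lemma is_RInt_gen_integrand1 a t : 2 < a -> 0 < t ->
  exists S, is_RInt_gen (integrand1 a t) at_0_right at_p_infty S /\ 0 < S.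
Proof.
  intros ha ht. apply (is_RInt_gen_of_decay a t); auto; intros x hx; unfold integrand1.
  - apply (ex_derive_continuous (K := R_AbsRing) (V := R_NormedModule)).
    unfold xpow, Rpower. auto_derive. lra.
  - apply Rdiv_lt_0_compat; [apply Rmult_lt_0_compat; apply exp_pos | lra].
  - pose proof (Rpower_pos x (2 / a) : 0 < xpow a x). pose proof (exp_pos (- t * xpow a x)).
    replace ((1 + x) * (xpow a x * exp (- t * xpow a x) / (1 + x)))
      with (xpow a x * exp (- t * xpow a x)) by (field; lra).
    nra.
Qed.

Lemma exp_sub_mul_nonneg d m y : 0 < d -> 0 <= (y - m) * (exp (- d * m) - exp (- d * y)).
Proof.
  intros hd. destruct (Rle_or_lt m y).
  - assert (exp (- d * y) <= exp (- d * m)) by (apply exp_le; nra). nra.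
  - assert (exp (- d * m) <= exp (- d * y)) by (apply exp_le; nra). nra.
Qed.

Lemma integrals_cross_lt a t t' S0 S1 T0 T1 : 2 < a -> 0 < t -> t < t' ->
  is_RInt_gen (integrand0 a t) at_0_right at_p_infty S0 ->
  is_RInt_gen (integrand1 a t) at_0_right at_p_infty S1 ->
  is_RInt_gen (integrand0 a t') at_0_right at_p_infty T0 ->
  is_RInt_gen (integrand1 a t') at_0_right at_p_infty T1 ->
  0 < S0 -> 0 < S1 -> S0 * T1 < T0 * S1.
Proof.
  intros ha ht htt' HS0 HS1 HT0 HT1 hS0 hS1.
  set (m := S1 / S0). set (d := t' - t). set (c := exp (- d * m)).
  assert (hm : 0 < m) by (apply Rdiv_lt_0_compat; auto).
  assert (hd : 0 < d) by (unfold d; lra).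
  set (h := fun x => m * integrand0 a t' x - integrand1 a t' x
                     + (c * integrand1 a t x - c * m * integrand0 a t x)).
  assert (Hh : is_RInt_gen h at_0_right at_p_infty (m * T0 - T1 + (c * S1 - c * m * S0))).
  { exact (is_RInt_gen_plus _ _ _ _
             (is_RInt_gen_minus _ _ _ _ (is_RInt_gen_scal _ m _ HT0) HT1)
             (is_RInt_gen_minus _ _ _ _ (is_RInt_gen_scal _ c _ HS1)
                (is_RInt_gen_scal _ (c * m) _ HS0))). }
  assert (h_eq : forall x, 0 < x ->
    h x = (xpow a x - m) * (c - exp (- d * xpow a x)) * integrand0 a t x).
  { intros x hx. unfold h, integrand0, integrand1.
    replace (- t' * xpow a x) with (- d * xpow a x + - t * xpow a x) by (unfold d; ring).
    rewrite exp_plus. field. lra. }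
  assert (integrand0_pos : forall x, 0 < x -> 0 < integrand0 a t x)
    by (intros; apply Rdiv_lt_0_compat; [apply exp_pos | lra]).
  assert (0 < m * T0 - T1 + (c * S1 - c * m * S0)).
  { apply (is_RInt_gen_gt_0 h); auto.
    - intros x hx. apply (ex_derive_continuous (K := R_AbsRing) (V := R_NormedModule)).
      unfold h, integrand0, integrand1, xpow, Rpower. auto_derive. lra.
    - intros x hx. rewrite h_eq by exact hx.
      apply Rmult_le_pos; [apply exp_sub_mul_nonneg | apply Rlt_le, integrand0_pos]; lra.
    - set (x0 := Rpower (m + 1) (a / 2)).
      assert (hx0 : xpow a x0 = m + 1).
      { unfold xpow, x0. rewrite Rpower_mult.
        replace (a / 2 * (2 / a)) with 1 by (field; lra). apply Rpower_1; lra. }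
      exists x0. split; [apply Rpower_pos |].
      rewrite h_eq, hx0 by apply Rpower_pos.
      assert (exp (- d * (m + 1)) < c) by (apply exp_increasing; nra).
      pose proof (integrand0_pos x0 (Rpower_pos _ _)). nra. }
  assert (m * S0 = S1) by (unfold m; field; lra).
  assert (T1 < m * T0) by nra.
  replace (T0 * S1) with (S0 * (m * T0)) by (unfold m; field; lra).
  apply Rmult_lt_compat_l; lra.
Qed.

Theorem lemma3 (alpha s1 : R) (halpha : 2 < alpha) (hs1 : 0 < s1) :
  forall s2 s2' : R, 0 < s2 -> s2 < s2' -> fratio alpha s1 s2 < fratio alpha s1 s2'.
Proof.
  intros s2 s2' h2 h2'.
  destruct (is_RInt_gen_integrand0 alpha (s1 + s2) halpha ltac:(lra)) as [S0 [HS0 hS0]].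
  destruct (is_RInt_gen_integrand1 alpha (s1 + s2) halpha ltac:(lra)) as [S1 [HS1 hS1]].
  destruct (is_RInt_gen_integrand0 alpha (s1 + s2') halpha ltac:(lra)) as [T0 [HT0 hT0]].
  destruct (is_RInt_gen_integrand1 alpha (s1 + s2') halpha ltac:(lra)) as [T1 [HT1 hT1]].
  assert (hcross : S0 * T1 < T0 * S1)
    by (apply (integrals_cross_lt alpha (s1 + s2) (s1 + s2')); auto; lra).
  assert (E0 : I0 alpha s1 s2 = S0) by exact (is_RInt_gen_unique _ _ HS0).
  assert (E1 : I1 alpha s1 s2 = S1) by exact (is_RInt_gen_unique _ _ HS1).
  assert (F0 : I0 alpha s1 s2' = T0) by exact (is_RInt_gen_unique _ _ HT0).
  assert (F1 : I1 alpha s1 s2' = T1) by exact (is_RInt_gen_unique _ _ HT1).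
  unfold fratio. rewrite E0, E1, F0, F1.
  replace (S0 / (s1 * S1)) with (S0 * T1 / (s1 * S1 * T1)) by (field; lra).
  replace (T0 / (s1 * T1)) with (T0 * S1 / (s1 * S1 * T1)) by (field; lra).
  apply Rmult_lt_compat_r; [| exact hcross].
  apply Rinv_0_lt_compat, Rmult_lt_0_compat; [apply Rmult_lt_0_compat |]; lra.
Qed.
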